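(* Let $d,m\in\mathbb{N}$, $q\in[1,\infty]$, $\sigma>0$, and let $\varphi:\mathbb{R}^d\to[0,\infty)$ be a probability density with $\varphi\in L^q(\mathbb{R}^d)$. Then for every $f$ of the form $f=\sum_{i=1}^m\alpha_i\varphi_{\mu_i,\sigma}$ with $(\alpha_1,\dots,\alpha_m)\in[0,1]^m$, $\sum_i\alpha_i=1$, and $\mu_1,\dots,\mu_m\in\mathbb{R}^d$, and every $\varepsilon>0$, there is $p\in\mathsf{DBN}_\varphi(d,m,m+1)$ whose visible density satisfies $\|f-p\|_{L^q}\leq\varepsilon$.
   Context: $\varphi_{\mu,\sigma}(x)=\sigma^{-d}\varphi((x-\mu)/\sigma)$ and $\mathscr{V}_\varphi^\sigma=\{\varphi_{\mu,\sigma}:\mu\in\mathbb{R}^d\}$; the set of such $f$ is the truncated convex hull $\mathrm{cv}_m(\mathscr{V}_\varphi^\sigma)$. For $q=\infty$, $\|g\|_{L^\infty}=\sup_x|g(x)|$. Binary-binary RBM: $\mathsf{B\text{-}RBM}(m,n)$ is the set of probability measures on $\{0,1\}^m\times\{0,1\}^n$ of the form $\pi(v,h)=e^{-\mathcal{H}(v,h)}/\mathcal{Z}$ with $\mathcal{H}(v,h)=\langle v,Wh\rangle+\langle v,b\rangle+\langle h,c\rangle$, $W\in\mathbb{R}^{m\times n}$, $b\in\mathbb{R}^m$, $c\in\mathbb{R}^n$, $\mathcal{Z}=\sum_{v,h}e^{-\mathcal{H}(v,h)}$. $\mathsf{DBN}_\varphi(d,m,n)$ is the set of joint distributions $p(v,h_1,h_2)=p(v\mid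 h_1)\,\pi(h_1,h_2)$ on $\mathbb{R}^d\times\{0,1\}^m\times\{0,1\}^n$ with $\pi\in\mathsf{B\text{-}RBM}(m,n)$ and, for some $\sigma'>0$, $p(\cdot\mid h_1)\in\mathscr{V}_\varphi^{\sigma'}$ for each $h_1$; $p$ is identified with its visible density $p(v)=\sum_{h_1,h_2}p(v,h_1,h_2)$. *)

From HB Require Import structures.
From mathcomp Require Import all_boot all_order all_algebra.
From mathcomp Require Import all_classical all_reals all_analysis.
Set Implicit Arguments. Unset Strict Implicit. Unset Printing Implicit Defensive.
Import Order.TTheory GRing.Theory Num.Theory.
Import numFieldNormedType.Exports.
Local Open Scope classical_set_scope.
Local Open Scope ring_scope.

(* Points of R^d are d-tuples of reals.  n.-tuple R carries MathComp-Analysis'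
   product (= Borel) sigma-algebra (measure_tuple_display). *)

Section Defs.
Variable R : realType.

(* Lebesgue integral on R^n of a [0,+oo]-valued function, computed as the
   iterated one-dimensional Lebesgue integral (Tonelli).  For n = 0, R^0 is a
   point with unit mass. *)
Fixpoint iint (n : nat) : (n.-tuple R -> \bar R) -> \bar R :=
  match n return (n.-tuple R -> \bar R) -> \bar R with
  | 0 => fun g => g [tuple]
  | n'.+1 => fun g =>
      (\int[@lebesgue_measure R]_x iint (fun t : n'.-tuple R => g (cons_tuple x t)))%E
  end.

Definition LqNorm (n : nat) (q : \bar R) (g : n.-tuple R -> R) : \bar R :=
  match q with
  | r%:E => ((iint (fun x => (`|g x| `^ r)%:E)) `^ r^-1)%E
  | +oo%E => ereal_sup [set (`|g x|)%:E | x in [set: n.-tuple R]]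
  | -oo%E => 0%E
  end.

Definition shift_scale (d : nat) (phi : d.-tuple R -> R) (mu : d.-tuple R)
  (sigma : R) : d.-tuple R -> R :=
  fun x => sigma ^- d * phi [tuple (tnth x i - tnth mu i) / sigma | i < d].

Definition rbm_energy (m n : nat) (W : 'M[R]_(m, n)) (b : 'I_m -> R)
  (c : 'I_n -> R) (v : m.-tuple bool) (h : n.-tuple bool) : R :=
  \sum_(i < m) \sum_(j < n) (tnth v i)%:R * W i j * (tnth h j)%:R
  + \sum_(i < m) (tnth v i)%:R * b i + \sum_(j < n) (tnth h j)%:R * c j.

Definition rbm_partition (m n : nat) (W : 'M[R]_(m, n)) (b : 'I_m -> R)
  (c : 'I_n -> R) : R :=
  \sum_(v : m.-tuple bool) \sum_(h : n.-tuple bool) expR (- rbm_energy W b c v h).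

Definition rbm (m n : nat) (W : 'M[R]_(m, n)) (b : 'I_m -> R) (c : 'I_n -> R)
  (v : m.-tuple bool) (h : n.-tuple bool) : R :=
  expR (- rbm_energy W b c v h) / rbm_partition W b c.

Definition dbn_visible (d m n : nat) (phi : d.-tuple R -> R) (sigma' : R)
  (mu : m.-tuple bool -> d.-tuple R) (W : 'M[R]_(m, n)) (b : 'I_m -> R)
  (c : 'I_n -> R) : d.-tuple R -> R :=
  fun v => \sum_(h1 : m.-tuple bool) \sum_(h2 : n.-tuple bool)
             shift_scale phi (mu h1) sigma' v * rbm W b c h1 h2.

(* p (identified with its visible density) belongs to DBN_phi(d,m,n). *)
Definition in_DBN (d m n : nat) (phi : d.-tuple R -> R) (p : d.-tuple R -> R) :=
  exists sigma' : R, 0 < sigma' /\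
  exists (mu : m.-tuple bool -> d.-tuple R) (W : 'M[R]_(m, n))
         (b : 'I_m -> R) (c : 'I_n -> R),
    p = dbn_visible phi sigma' mu W b c.

Definition prob_density (d : nat) (phi : d.-tuple R -> R) :=
  [/\ forall x, 0 <= phi x, measurable_fun [set: d.-tuple R] phi
    & iint (fun x => (phi x)%:E) = 1%E].

End Defs.

From HB Require Import structures.
From mathcomp Require Import all_boot all_order all_algebra.
From mathcomp Require Import all_classical all_reals all_analysis.
From mathcomp Require Import lra ring.
Set Implicit Arguments. Unset Strict Implicit.
Import Order.TTheory GRing.Theory Num.Theory.
Local Open Scope classical_set_scope.
Local Open Scope ring_scope.

(* The mixture is realised exactly, by stick breaking.  Flip independent coins
   with biases r_k = alpha_k / (alpha_k + ... + alpha_(m-1)) and report the first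
   index whose coin breaks the stick: index i comes up with probability
   r_i * prod_(k < i) (1 - r_k) = alpha_i.  An RBM with zero interaction matrix
   makes its visible units independent Bernoulli variables, with biases set by
   the visible bias vector; sending each visible configuration to the component
   mean of its first-break index gives a DBN whose visible density is f itself,
   so the L^q error is 0. *)

Lemma sum_tuple_prod_dep (R : comPzSemiRingType) (T : finType) n
    (Q : 'I_n -> pred T) (F : 'I_n -> T -> R) :
  \sum_(t : n.-tuple T | [forall i, Q i (tnth t i)]) \prod_i F i (tnth t i)
  = \prod_i \sum_(x | Q i x) F i x.
Proof.
rewrite bigA_distr_big_dep (reindex (fun f : {ffun 'I_n -> T} => [tuple f i | i < n])) /=.
  apply: eq_big => [f|f _]; last by apply: eq_bigr => i _; rewrite tnth_mktuple.
  by apply/forallP/familyP => Qf i; have := Qf i; rewrite tnth_mktuple.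
exists (fun t : n.-tuple T => [ffun i => tnth t i]) => [f _|t _].
  by apply/ffunP => i; rewrite ffunE tnth_mktuple.
by apply: eq_from_tnth => i; rewrite tnth_mktuple ffunE.
Qed.

Lemma sum_tuple_prod (R : comPzSemiRingType) (T : finType) n (F : 'I_n -> T -> R) :
  \sum_(t : n.-tuple T) \prod_i F i (tnth t i) = \prod_i \sum_x F i x.
Proof.
rewrite -(@sum_tuple_prod_dep _ _ _ (fun _ => predT)).
by apply: eq_bigl => t; apply/esym/forallP.
Qed.

Lemma LqNorm0 (R : realType) n (q : \bar R) :
  q != 0%E -> LqNorm q (fun _ : n.-tuple R => 0) = 0%E.
Proof.
case: q => [r||] //= q_neq0; last first.
  rewrite normr0 (_ : [set _ | _ in _] = [set 0%E]) ?ereal_sup1 //.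
  by apply/seteqP; split => [_ [x _ <-] //|_ ->]; exists (nseq_tuple n 0).
have iint0 k : iint (fun _ : k.-tuple R => 0%E) = 0%E.
  by elim: k => //= k ->; rewrite integral0.
rewrite normr0 powR0 ?iint0 /= ?powR0 ?invr_eq0 //.
Qed.

Section RBMZeroWeights.
Variables (R : realType) (m n : nat) (b : 'I_m -> R) (c : 'I_n -> R).

Let unit_boltzmann {k} (a : 'I_k -> R) i (x : bool) := expR (- (x%:R * a i)).

Lemma expR_rbm_energy_zero_weights v h :
  expR (- rbm_energy (0 : 'M[R]_(m, n)) b c v h) =
  \prod_i unit_boltzmann b i (tnth v i) * \prod_j unit_boltzmann c j (tnth h j).
Proof.
rewrite /rbm_energy big1 ?add0r => [|i _]; last first.
  by apply: big1 => j _; rewrite mxE mulr0 mul0r.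
by rewrite opprD expRD -!sumrN !expR_sum.
Qed.

Lemma sum_unit_boltzmann {k} (a : 'I_k -> R) i :
  \sum_x unit_boltzmann a i x = 1 + expR (- a i).
Proof. by rewrite big_bool /unit_boltzmann /= mul1r mul0r oppr0 expR0 addrC. Qed.

Lemma rbm_marginal_zero_weights v :
  \sum_h rbm (0 : 'M[R]_(m, n)) b c v h =
  \prod_i (expR (- ((tnth v i)%:R * b i)) / (1 + expR (- b i))).
Proof.
have hidden_mass_gt0 : 0 < \prod_j \sum_y unit_boltzmann c j y.
  by apply: prodr_gt0 => j _; rewrite sum_unit_boltzmann addr_gt0 ?expR_gt0.
rewrite /rbm /rbm_partition -mulr_suml.
have factorize := expR_rbm_energy_zero_weights.
rewrite (eq_bigr _ (fun h _ => factorize v h)) -mulr_sumr sum_tuple_prod.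
rewrite [X in _ / X](eq_bigr _ (fun v' _ => eq_bigr _ (fun h _ => factorize v' h))).
under [X in _ / X]eq_bigr do rewrite -mulr_sumr sum_tuple_prod.
rewrite -mulr_suml sum_tuple_prod invfM mulrACA divff ?gt_eqF // mulr1 -prodfV -big_split.
by apply: eq_bigr => i _; rewrite sum_unit_boltzmann.
Qed.

End RBMZeroWeights.

Lemma rbm_bernoulli_marginal (R : realType) m n (p : 'I_m -> R) (c : 'I_n -> R)
    (v : m.-tuple bool) :
  (forall i, 0 < p i < 1) ->
  \sum_h rbm (0 : 'M[R]_(m, n)) (fun i => ln ((1 - p i) / p i)) c v h =
  \prod_i (if tnth v i then p i else 1 - p i).
Proof.
move=> p_bd; rewrite rbm_marginal_zero_weights; apply: eq_bigr => i _.
have /andP [p_gt0 p_lt1] := p_bd i.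
have odds : expR (- ln ((1 - p i) / p i)) = p i / (1 - p i).
  by rewrite expRN lnK ?invf_div // posrE divr_gt0 ?subr_gt0.
have q_neq0 : 1 - p i != 0 by rewrite subr_eq0 gt_eqF.
by case: (tnth v i); rewrite /= ?mul1r ?mul0r ?oppr0 ?expR0 odds;
  field; rewrite q_neq0 subrK oner_neq0.
Qed.

Section StickBreaking.
Variables (R : realType) (m : nat) (alpha : 'I_m -> R).
Hypothesis alpha_ge0 : forall i, 0 <= alpha i.
Hypothesis alpha_sum1 : \sum_i alpha i = 1.

Definition tail_mass (i : nat) : R := \sum_(k < m | (i <= k)%N) alpha k.

Definition break_ratio (k : 'I_m) : R := alpha k / tail_mass k.

Lemma tail_mass_ge0 i : 0 <= tail_mass i.
Proof. exact: sumr_ge0. Qed.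

Lemma tail_mass0 : tail_mass 0 = 1.
Proof. by rewrite /tail_mass -alpha_sum1; apply: eq_bigl. Qed.

Lemma tail_mass_end : tail_mass m = 0.
Proof. by rewrite /tail_mass big_pred0 // => k; rewrite leqNgt ltn_ord. Qed.

Lemma tail_massS (k : 'I_m) : tail_mass k = alpha k + tail_mass k.+1.
Proof.
rewrite /tail_mass (bigD1 k) //=; congr (_ + _); apply: eq_bigl => j.
by rewrite ltn_neqAle andbC eq_sym.
Qed.

Lemma break_ratioK k : break_ratio k * tail_mass k = alpha k.
Proof.
have [tail0|tail_neq0] := eqVneq (tail_mass k) 0; last by rewrite divfK.
have := tail_massS k; have := tail_mass_ge0 k.+1; have := alpha_ge0 k.
rewrite tail0 mulr0; lra.
Qed.

Lemma break_ratio_ge0 k : 0 <= break_ratio k.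
Proof. by rewrite divr_ge0 ?tail_mass_ge0. Qed.

Lemma break_ratio_le1 k : break_ratio k <= 1.
Proof.
rewrite /break_ratio; have [->|tail_neq0] := eqVneq (tail_mass k) 0.
  by rewrite invr0 mulr0.
rewrite ler_pdivrMr ?lt_def ?tail_neq0 ?tail_mass_ge0 // mul1r (tail_massS k).
by rewrite lerDl tail_mass_ge0.
Qed.

Lemma survival_step (k : 'I_m) : (1 - break_ratio k) * tail_mass k = tail_mass k.+1.
Proof. by rewrite mulrBl mul1r break_ratioK (tail_massS k) addrC addKr. Qed.

Lemma prod_survival i : (i <= m)%N ->
  \prod_(k < m | (k < i)%N) (1 - break_ratio k) = tail_mass i.
Proof.
elim: i => [_|i IHi i_lt_m]; first by rewrite big_pred0 // tail_mass0.
rewrite (bigD1 (Ordinal i_lt_m)) //= -(survival_step (Ordinal i_lt_m)).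
congr (_ * _); rewrite -IHi 1?ltnW //; apply: eq_bigl => k.
by rewrite -val_eqE /= ltnS leq_eqVlt; case: ltngtP.
Qed.

Lemma exists_break_ratio1 : exists k, break_ratio k = 1.
Proof.
have := prod_survival (leqnn m); rewrite tail_mass_end => /eqP /prodf_eq0 [k _].
by rewrite subr_eq0 => /eqP r1; exists k.
Qed.

(* The RBM only produces coins with bias in (0, 1), so a ratio 0 or 1 is
   realised by ignoring the coin. *)
Definition coin_prob k : R :=
  if 0 < break_ratio k < 1 then break_ratio k else 2^-1.

Definition breaks k (x : bool) : bool :=
  if break_ratio k == 0 then false else if break_ratio k == 1 then true else x.

Definition coin_weight k (x : bool) : R := if x then coin_prob k else 1 - coin_prob k.

Lemma coin_prob_itv k : 0 < coin_prob k < 1.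
Proof. by rewrite /coin_prob; case: ifP => // _; apply/andP; split; lra. Qed.

Lemma sum_coin_breaks k : \sum_(x | breaks k x) coin_weight k x = break_ratio k.
Proof.
have := break_ratio_ge0 k; have := break_ratio_le1 k.
rewrite big_mkcond big_bool /breaks /coin_weight /coin_prob /=.
case: eqP => [-> _ _|r_neq0]; first by rewrite addr0.
case: eqP => [-> _ _|r_neq1] /=; first by rewrite addrC subrK.
by rewrite !le_eqVlt => /predU1P[//|->] /predU1P[/esym//|->]; rewrite addr0.
Qed.

Lemma sum_coin_weight k : \sum_x coin_weight k x = 1.
Proof. by rewrite big_bool /coin_weight /= addrC subrK. Qed.

Lemma sum_coin_holds k : \sum_(x | ~~ breaks k x) coin_weight k x = 1 - break_ratio k.
Proof.
rewrite -(sum_coin_weight k) [X in X - _](bigID (breaks k)) /= sum_coin_breaks.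
by rewrite addrAC subrr add0r.
Qed.

Definition first_break (h : m.-tuple bool) (i : 'I_m) : bool :=
  breaks i (tnth h i) && [forall k : 'I_m, (k < i)%N ==> ~~ breaks k (tnth h k)].

Lemma mass_first_break i :
  \sum_(h | first_break h i) \prod_k coin_weight k (tnth h k) = alpha i.
Proof.
pose Q (k : 'I_m) x := if (k < i)%N then ~~ breaks k x else (k == i) ==> breaks k x.
have first_breakE h : first_break h i = [forall k, Q k (tnth h k)].
  apply/andP/forallP => [[breaks_i /forallP holds] k|Qh].
    rewrite /Q; case: ltnP => [k_lt_i|_]; first exact: (implyP (holds k)).
    by apply/implyP => /eqP ->.
  split; first by have := Qh i; rewrite /Q ltnn eqxx.
  by apply/forallP => k; apply/implyP => k_lt_i; have := Qh k; rewrite /Q k_lt_i.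
rewrite (eq_bigl _ _ first_breakE) sum_tuple_prod_dep (bigD1 i) //=.
rewrite {1}/Q ltnn eqxx sum_coin_breaks.
rewrite (eq_bigr (fun k : 'I_m => if (k < i)%N then 1 - break_ratio k else 1)).
  rewrite -big_mkcondr /= (eq_bigl (fun k : 'I_m => (k < i)%N)) => [|k].
    by rewrite prod_survival 1?ltnW // break_ratioK.
  by rewrite andb_idl // => k_lt_i; rewrite neq_ltn k_lt_i.
move=> k /negbTE k_neq_i; rewrite /Q k_neq_i; case: ltnP => _.
  exact: sum_coin_holds.
exact: sum_coin_weight.
Qed.

Lemma first_break_uniq h i j : first_break h i -> first_break h j -> i = j.
Proof.
move=> /andP [breaks_i /forallP holds_i] /andP [breaks_j /forallP holds_j].
apply/val_inj; case: (ltngtP i j) => // [i_lt_j|j_lt_i].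
  by have := holds_j i; rewrite i_lt_j breaks_i.
by have := holds_i j; rewrite j_lt_i breaks_j.
Qed.

Lemma exists_first_break h : exists i, first_break h i.
Proof.
have [k rk1] := exists_break_ratio1.
have breaks_k : breaks k (tnth h k) by rewrite /breaks rk1 oner_eq0 eqxx.
case: (@arg_minnP _ k (fun j => breaks j (tnth h j)) (@nat_of_ord m) breaks_k).
move=> i breaks_i i_min.
exists i; rewrite /first_break breaks_i; apply/forallP => j; apply/implyP => j_lt_i.
by apply/negP => /i_min; rewrite leqNgt j_lt_i.
Qed.

Definition break_index (h : m.-tuple bool) : option 'I_m := [pick i | first_break h i].

Lemma break_indexE h i : (break_index h == Some i) = first_break h i.
Proof.
rewrite /break_index; case: pickP => [j first_j|none]; last first.
  by have [j first_j] := exists_first_break h; rewrite none in first_j.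
apply/eqP/idP => [[<-] //|first_i]; congr Some; exact: first_break_uniq first_j first_i.
Qed.

Lemma stick_breaking_mixture (F : option 'I_m -> R) :
  \sum_h F (break_index h) * \prod_k coin_weight k (tnth h k) =
  \sum_i alpha i * F (Some i).
Proof.
rewrite (partition_big break_index (fun o => o != None)) => [|h _]; last first.
  by have [i] := exists_first_break h; rewrite -break_indexE => /eqP ->.
rewrite (reindex_omap Some id) => [|[] //]; apply: eq_big => [i|i _].
  by rewrite eqxx.
rewrite -mass_first_break mulr_suml.
by apply: eq_big => [h|h /eqP ->]; rewrite ?break_indexE // mulrC.
Qed.

End StickBreaking.

Theorem lemma1 (R : realType) (d m : nat) (q : \bar R) (sigma : R)
  (phi : d.-tuple R -> R) :
  (1 <= q)%E -> 0 < sigma -> prob_density phi -> (LqNorm q phi < +oo)%E ->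
  forall (alpha : 'I_m -> R) (mu : 'I_m -> d.-tuple R),
    (forall i, 0 <= alpha i <= 1) -> \sum_(i < m) alpha i = 1 ->
    forall eps : R, 0 < eps ->
      exists p : d.-tuple R -> R,
        in_DBN m m.+1 phi p /\
        (LqNorm q (fun x : d.-tuple R =>
                     (\sum_(i < m) alpha i * shift_scale phi (mu i) sigma x - p x)%R)
           <= eps%:E)%E.
Proof.
move=> q_ge1 sigma_gt0 _ _ alpha mu alpha_bd alpha_sum1 eps eps_gt0.
have alpha_ge0 i : 0 <= alpha i by case/andP: (alpha_bd i).
pose mu' h := oapp mu (nseq_tuple d 0) (break_index alpha h).
pose bias k := ln ((1 - coin_prob alpha k) / coin_prob alpha k).
pose p := dbn_visible phi sigma mu' (0 : 'M[R]_(m, m.+1)) bias (fun _ => 0).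
have p_mixture x : p x = \sum_i alpha i * shift_scale phi (mu i) sigma x.
  rewrite -(stick_breaking_mixture alpha_ge0 alpha_sum1
             (fun o => shift_scale phi (oapp mu (nseq_tuple d 0) o) sigma x)).
  apply: eq_bigr => h _; rewrite -mulr_sumr rbm_bernoulli_marginal //.
  exact: coin_prob_itv.
exists p; split; first by exists sigma; split => //; do 4 eexists.
rewrite (_ : (fun x => _) = fun _ => 0); last first.
  by apply: funext => x; rewrite p_mixture subrr.
rewrite LqNorm0 ?lee_fin ?ltW //.
by apply: contraTneq q_ge1 => ->; rewrite lee_fin ler10.
Qed.
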